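(* Let $K$ be a field, $Q$ the bipartite type $A$ quiver with vertices $y_0,x_1,\dots,x_n,y_n$ and arrows $\alpha_i\colon x_i\to y_{i-1}$, $\beta_i\colon x_i\to y_i$, $\mathbf{d}$ a dimension vector, $\mathbf{r}$ a quiver rank array, and $\mathbf{b}(\mathbf{r})$ its block rank matrix. Then there exists a unique $d\times d$ permutation matrix $v(\mathbf{r})$ such that (1) for all $1\le i,j\le 2n+1$ the number of $1$s in block $(i,j)$ of $v(\mathbf{r})$ equals $\mathbf{b}(\mathbf{r})_{i,j}+\mathbf{b}(\mathbf{r})_{i-1,j-1}-\mathbf{b}(\mathbf{r})_{i,j-1}-\mathbf{b}(\mathbf{r})_{i-1,j}$, where $\mathbf{b}(\mathbf{r})_{i,j}=0$ if $i$ or $j$ lies outside $[1,2n+1]$; (2) the $1$s are arranged from northwest to southeast across each block row; (3) the $1$s are arranged from northwest to southeast down each block column.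
   Context: $\mathrm{rep}_Q(\mathbf{d})$: tuples $V=(V_a)$, $V_a\in\mathrm{Mat}_{\mathbf{d}(ha)\times\mathbf{d}(ta)}(K)$. $M_Q(V)$: block matrix with block rows $y_0,\dots,y_n$ and block columns $x_n,\dots,x_1$, with $V_{\alpha_i}$ in block $(y_{i-1},x_i)$, $V_{\beta_i}$ in block $(y_i,x_i)$, zeros elsewhere; for an interval $J$ (nonempty set of consecutive vertices), $M_J(V)$ is its submatrix on block rows of $y$-vertices of $J$ and block columns of $x$-vertices of $J$. A quiver rank array $\mathbf{r}$ is a function on intervals of the form $J\mapsto\operatorname{rank}M_J(V)$ for some $V$; $\mathcal{O}_\mathbf{r}$ the set of such $V$. $d_x=\sum\mathbf{d}(x_i)$, $d_y=\sum\mathbf{d}(y_i)$, $d=d_x+d_y$, $\zeta(V)=\begin{pmatrix}M_Q(V)&\mathbf{1}_{d_y}\\ \mathbf{1}_{d_x}&0\end{pmatrix}$. $d\times d$ matrices are divided into row blocks of sizes $\mathbf{d}(y_0),\dots,\mathbf{d}(y_n),\mathbf{d}(x_n),\dots,\mathbf{d}(x_1)$ and column blocks of sizes $\mathbf{d}(x_n),\dots,\mathbf{d}(x_1),\mathbf{d}(y_0),\dots,\mathbf{d}(y_n)$, numbered $1..2n+1$; $Z_{i\times j}$ is the submatrix of block rows $1..i$ and block columns $1..j$; $\mathbf{b}(\mathbf{r})_{i,j}=\operatorname{rank}\zeta(V)_{i\times j}$ for $V\in\mathcal{O}_\mathbf{r}$. ''Northwest to southeast across a block row'' means: of any two $1$s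 in the same block row, the one in the higher row lies in the column further left (similarly for block columns). *)

From HB Require Import structures.
From mathcomp Require Import all_boot all_order all_algebra.
Set Implicit Arguments. Unset Strict Implicit. Unset Printing Implicit Defensive.
Import GRing.Theory.
Local Open Scope ring_scope.

(* Conventions:
   - n : the quiver has vertices y_0, x_1, y_1, ..., x_n, y_n.
   - dimension vector: dy k = d(y_k) (k = 0..n), dx k = d(x_k) (k = 1..n).
   - representation: Va k = V_{alpha_k} : d(x_k) -> d(y_{k-1}),
                     Vb k = V_{beta_k}  : d(x_k) -> d(y_k)       (k = 1..n);
     values at other k are irrelevant. *)

(* entry of a matrix at natural-number indices (0 outside the range) *)
Definition mxnat (K : fieldType) m n (A : 'M[K]_(m, n)) (a b : nat) : K :=
  oapp (fun i : 'I_m => oapp (fun j : 'I_n => A i j) 0%R (insub b)) 0%R (insub a).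

(* M_Q(V): block rows y_0..y_n, block columns x_n, ..., x_1
   (block column j < n is x_(n-j)). *)
Definition MQ (K : fieldType) (n : nat) (dy dx : nat -> nat)
  (Va : forall k, 'M[K]_(dy k.-1, dx k)) (Vb : forall k, 'M[K]_(dy k, dx k)) :
  'M[K]_(\sum_(i < n.+1) dy i, \sum_(j < n) dx (n - j)%N)%N :=
  @mxblock K n.+1 n (fun i : 'I_n.+1 => dy i) (fun j : 'I_n => dx (n - j)%N)
    (fun i j => \matrix_(a < dy i, c < dx (n - j)%N)
       (if (i.+1 == n - j)%N then mxnat (Va (n - j)%N) a c
        else if (i == (n - j)%N :> nat) then mxnat (Vb (n - j)%N) a c else 0%R)).

(* vertices in the linear order y_0, x_1, y_1, ..., x_n, y_n are numbered
   0, 1, ..., 2n: y_k has position 2k, x_k has position 2k-1.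
   The interval J = [p, q] (p <= q <= 2n). *)
Definition Ypre (dy : nat -> nat) (k : nat) : nat := (\sum_(i < k) dy i)%N.
Definition Xpre (n : nat) (dx : nat -> nat) (j : nat) : nat := (\sum_(l < j) dx (n - l))%N.

Definition rowin (n : nat) (dy : nat -> nat) (p q : nat) (a : nat) : bool :=
  [exists k : 'I_n.+1, (p <= k.*2 <= q)%N && (Ypre dy k <= a < Ypre dy k.+1)%N].
Definition colin (n : nat) (dx : nat -> nat) (p q : nat) (c : nat) : bool :=
  [exists j : 'I_n, (p <= (n - j).*2.-1 <= q)%N && (Xpre n dx j <= c < Xpre n dx j.+1)%N].

(* M_J(V): the submatrix of M_Q(V) on the block rows of the y-vertices of J
   and the block columns of the x-vertices of J, J = [p, q]. *)
Definition MJ (K : fieldType) (n : nat) (dy dx : nat -> nat)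
  (Va : forall k, 'M[K]_(dy k.-1, dx k)) (Vb : forall k, 'M[K]_(dy k, dx k))
  (p q : nat) :=
  let RS := [pred a : 'I_(\sum_(i < n.+1) dy i)%N | rowin n dy p q a] in
  let CS := [pred c : 'I_(\sum_(j < n) dx (n - j)%N)%N | colin n dx p q c] in
  mxsub (fun u : 'I_#|RS| => enum_val u) (fun w : 'I_#|CS| => enum_val w)
        (@MQ K n dy dx Va Vb).

Definition zeta (K : fieldType) (n : nat) (dy dx : nat -> nat)
  (Va : forall k, 'M[K]_(dy k.-1, dx k)) (Vb : forall k, 'M[K]_(dy k, dx k)) :=
  block_mx (@MQ K n dy dx Va Vb) 1%:M 1%:M 0.

(* block sizes (blocks numbered 1..2n+1):
   rows: d(y_0),...,d(y_n),d(x_n),...,d(x_1);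
   columns: d(x_n),...,d(x_1),d(y_0),...,d(y_n). *)
Definition rs (n : nat) (dy dx : nat -> nat) (k : nat) : nat :=
  if (k <= n.+1)%N then dy k.-1 else dx (n.*2.+2 - k)%N.
Definition cs (n : nat) (dy dx : nat -> nat) (k : nat) : nat :=
  if (k <= n)%N then dx (n.+1 - k)%N else dy (k - n.+1)%N.
Definition Rpre (n : nat) (dy dx : nat -> nat) (i : nat) : nat :=
  (\sum_(1 <= k < i.+1) rs n dy dx k)%N.
Definition Cpre (n : nat) (dy dx : nat -> nat) (j : nat) : nat :=
  (\sum_(1 <= k < j.+1) cs n dy dx k)%N.
(* d = d_x + d_y *)
Definition dtot (n : nat) (dy dx : nat -> nat) : nat := Rpre n dy dx n.*2.+1.

(* block rank matrix b_{i,j} = rank zeta(V)_{i x j}; 0 outside [1, 2n+1]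
   (for i = 0 or j = 0 the submatrix is empty, so its rank is 0). *)
Definition brank (K : fieldType) (n : nat) (dy dx : nat -> nat)
  (Va : forall k, 'M[K]_(dy k.-1, dx k)) (Vb : forall k, 'M[K]_(dy k, dx k))
  (i j : nat) : nat :=
  if (i <= n.*2.+1)%N && (j <= n.*2.+1)%N then
    \rank (\matrix_(a < Rpre n dy dx i, c < Cpre n dy dx j)
             mxnat (@zeta K n dy dx Va Vb) a c)
  else 0.

Definition nones (K : fieldType) (n : nat) (dy dx : nat -> nat)
  (v : 'M[K]_(dtot n dy dx)) (i j : nat) : nat :=
  #|[set pr : 'I_(dtot n dy dx) * 'I_(dtot n dy dx) |
      [&& (Rpre n dy dx i.-1 <= pr.1 < Rpre n dy dx i)%N,
          (Cpre n dy dx j.-1 <= pr.2 < Cpre n dy dx j)%N &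
          v pr.1 pr.2 == 1%R]]|.

Definition nw_rows (K : fieldType) (n : nat) (dy dx : nat -> nat)
  (v : 'M[K]_(dtot n dy dx)) : Prop :=
  forall (i : nat) (a1 a2 c1 c2 : 'I_(dtot n dy dx)),
    (1 <= i <= n.*2.+1)%N ->
    (Rpre n dy dx i.-1 <= a1 < Rpre n dy dx i)%N ->
    (Rpre n dy dx i.-1 <= a2 < Rpre n dy dx i)%N ->
    v a1 c1 = 1%R -> v a2 c2 = 1%R -> (a1 < a2)%N -> (c1 < c2)%N.

Definition nw_cols (K : fieldType) (n : nat) (dy dx : nat -> nat)
  (v : 'M[K]_(dtot n dy dx)) : Prop :=
  forall (j : nat) (a1 a2 c1 c2 : 'I_(dtot n dy dx)),
    (1 <= j <= n.*2.+1)%N ->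
    (Cpre n dy dx j.-1 <= c1 < Cpre n dy dx j)%N ->
    (Cpre n dy dx j.-1 <= c2 < Cpre n dy dx j)%N ->
    v a1 c1 = 1%R -> v a2 c2 = 1%R -> (c1 < c2)%N -> (a1 < a2)%N.

From HB Require Import structures.
From mathcomp Require Import all_boot all_order all_algebra all_fingroup zify.
Import GRing.Theory.
Set Implicit Arguments. Unset Strict Implicit. Unset Printing Implicit Defensive.

(* zeta(V) is invertible, with inverse [[0, 1], [1, -M_Q(V)]].  The ranks
   T a b of the a x b northwest corners of an invertible d x d matrix are those
   of a permutation matrix: T grows by at most 1 in each index and is
   submodular, so passing from a to a+1 rows adds exactly one pivot, in a column
   jump a, and jump is injective.  By inclusion-exclusion, condition (1) says
   that v has as many 1s as this permutation in every block.  Among the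
   permutations with prescribed block counts exactly one has no inversion inside
   a block row or a block column: a maximiser of sum_r r * s(r) has none, since
   swapping an inversion keeps the block counts and increases the sum, and two
   such permutations cannot differ, as is seen at the first row where they do. *)

Section Blocks.

Variable B : nat -> nat.
Hypothesis B_mono : {homo B : i j / i <= j}.

Definition in_block (i x : nat) : bool := B i.-1 <= x < B i.

Lemma in_block_leq i j x y : in_block i x -> in_block j y -> x <= y -> i <= j.
Proof.
case/andP=> lex _ /andP[_ ltyj] lexy; rewrite leqNgt; apply/negP => ltji.
have := B_mono (_ : j <= i.-1); lia.
Qed.

Lemma in_block_inj i j x : in_block i x -> in_block j x -> i = j.
Proof.
by move=> xi xj; apply/eqP; rewrite eqn_leq !(in_block_leq xi xj, in_block_leq xj xi).
Qed.

Lemma in_block_eq i0 i x y : in_block i0 x -> in_block i0 y -> in_block i x = in_block i y.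
Proof. by move=> xi0 yi0; apply/idP/idP => [/(in_block_inj xi0)|/(in_block_inj yi0)] <-. Qed.

Lemma in_block_exists N x : B 0 = 0 -> x < B N -> exists2 i, 0 < i <= N & in_block i x.
Proof.
move=> B0 ltxN; have exN : exists i, x < B i by exists N.
case: (ex_minnP exN) => -[|i]; rewrite ?B0 // => ltxi min_i.
exists i.+1; first by rewrite /= min_i.
by rewrite /in_block ltxi andbT leqNgt; apply/negP => /min_i; rewrite ltnn.
Qed.

End Blocks.

Section PermCounts.

Variables (d : nat) (R C : nat -> nat).
Hypotheses (R_mono : {homo R : i j / i <= j}) (C_mono : {homo C : i j / i <= j}).
Implicit Type s : {perm 'I_d}.

Definition corner_count s (a b : nat) : nat := \sum_(r : 'I_d) ((r < a) && (s r < b)).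

Definition block_count s (i j : nat) : nat :=
  \sum_(r : 'I_d) (in_block R i r && in_block C j (s r)).

Lemma block_count_corner s i j :
  block_count s i j + corner_count s (R i.-1) (C j) + corner_count s (R i) (C j.-1)
  = corner_count s (R i) (C j) + corner_count s (R i.-1) (C j.-1).
Proof.
rewrite /block_count /corner_count /in_block -!big_split; apply: eq_bigr => r _ /=.
have := R_mono (leq_pred i); have := C_mono (leq_pred j).
case: (ltnP r (R i.-1)); case: (ltnP r (R i)); case: (ltnP (s r) (C j.-1));
  case: (ltnP (s r) (C j)) => /=; lia.
Qed.

Lemma block_count_tperm_row s (r1 r2 : 'I_d) i0 :
  in_block R i0 r1 -> in_block R i0 r2 -> block_count (tperm r1 r2 * s)%g =2 block_count s.
Proof.
move=> r1i0 r2i0 i j; rewrite /block_count (reindex_inj (@perm_inj _ (tperm r1 r2))) /=.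
apply: eq_bigr => r _; rewrite permM tpermK; congr (_ && _).
by case: tpermP => // ->; apply: (in_block_eq R_mono (i0 := i0)).
Qed.

Lemma block_count_tperm_col s (r1 r2 : 'I_d) j0 :
  in_block C j0 (s r1) -> in_block C j0 (s r2) ->
  block_count (tperm r1 r2 * s)%g =2 block_count s.
Proof.
move=> r1j0 r2j0 i j; apply: eq_bigr => r _; rewrite permM; congr (_ && _).
by case: tpermP => // ->; apply: (in_block_eq C_mono (i0 := j0)).
Qed.

Definition weight s : nat := \sum_(r : 'I_d) r * s r.

Lemma weight_tperm s (r1 r2 : 'I_d) :
  r1 < r2 -> s r2 < s r1 -> weight s < weight (tperm r1 r2 * s)%g.
Proof.
move=> lt12 lt_s21; have ne21 : r2 != r1 by rewrite -val_eqE /= gtn_eqF.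
have others : \sum_(r | (r != r1) && (r != r2)) r * s r
            = \sum_(r | (r != r1) && (r != r2)) r * (tperm r1 r2 * s)%g r.
  by apply: eq_bigr => r /andP[ne1 ne2]; rewrite permM tpermD // eq_sym.
have split_at (t : {perm 'I_d}) : weight t
    = r1 * t r1 + (r2 * t r2 + \sum_(r | (r != r1) && (r != r2)) r * t r).
  by rewrite /weight (bigD1 r1) // (bigD1 r2) //=; under eq_bigl do rewrite andbC.
rewrite !split_at !permM tpermL tpermR -others; nia.
Qed.

Variable N : nat.

Definition nw_row_blocks s := forall i (r1 r2 : 'I_d), 0 < i <= N ->
  in_block R i r1 -> in_block R i r2 -> r1 < r2 -> s r1 < s r2.

Definition nw_col_blocks s := forall j (r1 r2 : 'I_d), 0 < j <= N ->
  in_block C j (s r1) -> in_block C j (s r2) -> s r1 < s r2 -> r1 < r2.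

(* A maximiser of [weight] among the permutations with the block counts of
   [sig] has no inversion inside a block row or column: swapping it would keep
   the block counts and increase the weight. *)
Lemma exists_nw_perm (sig : {perm 'I_d}) : exists tau : {perm 'I_d},
  [/\ forall i j, 0 < i <= N -> 0 < j <= N -> block_count tau i j = block_count sig i j,
      nw_row_blocks tau & nw_col_blocks tau].
Proof.
pose P s := [forall i : 'I_N.+1, forall j : 'I_N.+1,
               block_count s i j == block_count sig i j].
case: (@arg_maxnP _ sig P weight) => [|tau Ptau tau_max].
  by apply/forallP => i; apply/forallP.
have no_inversion (r1 r2 : 'I_d) : r1 < r2 ->
    block_count (tperm r1 r2 * tau)%g =2 block_count tau -> tau r1 < tau r2.
  move=> lt12 same_counts; rewrite ltn_neqAle leqNgt; apply/andP; split.
    by rewrite val_eqE (inj_eq perm_inj) -val_eqE /= ltn_eqF.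
  apply/negP => /(weight_tperm lt12); apply/negP; rewrite -leqNgt; apply: tau_max.
  apply/forallP => i; apply/forallP => j; rewrite same_counts.
  by move: Ptau => /forallP/(_ i)/forallP.
exists tau; split.
- move=> i j /andP[_ iN] /andP[_ jN]; move: Ptau => /forallP/(_ (Ordinal (iN : i < N.+1))).
  by move=> /forallP/(_ (Ordinal (jN : j < N.+1)))/eqP.
- move=> i r1 r2 _ r1i r2i lt12; apply: no_inversion => //.
  exact: block_count_tperm_row r1i r2i.
- move=> j r1 r2 _ r1j r2j lt_s12; case: ltngtP => // [lt21|/val_inj eq12].
    have := no_inversion r2 r1 lt21 (block_count_tperm_col r2j r1j).
    by rewrite ltnNge ltnW.
  by move: lt_s12; rewrite eq12 ltnn.
Qed.

Hypotheses (R0 : R 0 = 0) (RN : R N = d) (C0 : C 0 = 0) (CN : C N = d).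

(* At the first row [r] where [s1] and [s2] differ, [s1 r < s2 r] is impossible:
   in a common column block it contradicts [nw_col_blocks s2]; otherwise the
   rows [x >= r] of the block of [r] have [s2 x] beyond the column block of
   [s1 r], so [s2] has fewer 1s than [s1] in that block. *)
Lemma nw_perm_next_leq (s1 s2 : {perm 'I_d}) (r : 'I_d) :
  (forall i j, 0 < i <= N -> 0 < j <= N -> block_count s1 i j = block_count s2 i j) ->
  nw_row_blocks s2 -> nw_col_blocks s2 ->
  (forall r' : 'I_d, r' < r -> s1 r' = s2 r') -> s2 r <= s1 r.
Proof.
move=> same_counts nwr2 nwc2 agree; rewrite leqNgt; apply/negP => lt12.
have in_some_block (B : nat -> nat) (x : 'I_d) : B 0 = 0 -> B N = d ->
    exists2 i, 0 < i <= N & in_block B i x.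
  by move=> B0 BN; apply: in_block_exists B0 _; rewrite BN.
have [i iN ri] := in_some_block R r R0 RN.
have [j1 j1N j1_s1r] := in_some_block C (s1 r) C0 CN.
have [j2 j2N j2_s2r] := in_some_block C (s2 r) C0 CN.
have le_j12 : j1 <= j2 := in_block_leq C_mono j1_s1r j2_s2r (ltnW lt12).
have [eq_j12|ne_j12] := eqVneq j1 j2.
  pose r' := (s2^-1)%g (s1 r); have s2r' : s2 r' = s1 r by rewrite permKV.
  have lt_r'r : r' < r by apply: (nwc2 j2) => //; rewrite s2r' -?eq_j12.
  by move: (agree r' lt_r'r); rewrite s2r' => /perm_inj r'E; rewrite r'E ltnn in lt_r'r.
have lt_j12 : j1 < j2 by rewrite ltn_neqAle ne_j12.
have not_in_j1 (x : 'I_d) : in_block R i x -> r <= x -> ~~ in_block C j1 (s2 x).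
  move=> xi le_rx; apply/negP => /(in_block_leq C_mono j2_s2r) le_j21.
  have: j2 <= j1; last by rewrite leqNgt lt_j12.
  apply: le_j21; case: (ltngtP r x) le_rx => // [lt_rx|/val_inj <-] _; last exact: leqnn.
  exact/ltnW/(nwr2 i).
have : block_count s2 i j1 < block_count s1 i j1.
  rewrite /block_count (bigD1 r) // [X in _ < X](bigD1 r) //= ri j1_s1r.
  rewrite (negbTE (not_in_j1 r ri (leqnn r))) add0n add1n ltnS.
  apply: leq_sum => x _; case: (ltnP x r) => [/agree -> //|le_rx].
  by case xi: (in_block R i x); rewrite //= (negbTE (not_in_j1 x xi le_rx)).
by rewrite same_counts // ltnn.
Qed.

Lemma nw_perm_uniq (s1 s2 : {perm 'I_d}) :
  (forall i j, 0 < i <= N -> 0 < j <= N -> block_count s1 i j = block_count s2 i j) ->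
  nw_row_blocks s1 -> nw_col_blocks s1 -> nw_row_blocks s2 -> nw_col_blocks s2 -> s1 = s2.
Proof.
move=> same_counts nwr1 nwc1 nwr2 nwc2; apply/permP => r.
suff agree m (r' : 'I_d) : r' < m -> s1 r' = s2 r' by apply: agree (ltnSn r).
elim: m r' => // m IH r'; rewrite ltnS leq_eqVlt => /orP[/eqP r'm|]; last exact: IH.
have agree_below (t : 'I_d) : t < r' -> s1 t = s2 t by rewrite r'm; apply: IH.
apply/val_inj/eqP; rewrite eqn_leq !nw_perm_next_leq // => [i j iN jN|t /agree_below //].
by rewrite same_counts.
Qed.

End PermCounts.

Section RankFunctionPerm.

Variables (d : nat) (T : nat -> nat -> nat).
Hypotheses (T_rowS : forall a b, T a b <= T a.+1 b <= (T a b).+1)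
           (T_colS : forall a b, T a b <= T a b.+1 <= (T a b).+1)
           (T_submod : forall a b, T a.+1 b + T a b.+1 <= T a.+1 b.+1 + T a b)
           (T0b : forall b, T 0 b = 0) (Ta0 : forall a, T a 0 = 0)
           (T_full : forall a, a <= d -> T a d = a).

Definition jumps_at (a b : nat) : bool := (T a.+1 b.+1 == (T a b.+1).+1) || (d <= b).

Lemma jumps_at_exists a : exists b, jumps_at a b.
Proof. by exists d; rewrite /jumps_at leqnn orbT. Qed.

(* The column of the 1 in row [a] of the permutation: the least [b] with
   [T a.+1 b.+1 > T a b.+1]; the disjunct [d <= b] only makes the search total. *)
Definition jump (a : nat) : nat := ex_minn (jumps_at_exists a).

Lemma T_submod_far a b k : T a.+1 b + T a (b + k) <= T a.+1 (b + k) + T a b.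
Proof.
elim: k => [|k IHk]; first by rewrite !addn0.
by have := T_submod a (b + k); rewrite !addnS; lia.
Qed.

Lemma jump_lt a : a < d -> jump a < d.
Proof.
move=> lt_ad; rewrite /jump; case: ex_minnP => m _ min_m.
have: m <= d.-1; last by lia.
apply: min_m; rewrite /jumps_at prednK ?(leq_ltn_trans _ lt_ad) //.
by rewrite !T_full ?eqxx // ltnW.
Qed.

Lemma T_succ_row a b : a < d -> T a.+1 b = T a b + (jump a < b).
Proof.
move=> lt_ad; have lt_jd := jump_lt lt_ad; move: lt_jd; rewrite /jump.
case: ex_minnP => m jm min_m lt_md.
move: jm; rewrite /jumps_at leqNgt lt_md orbF => /eqP jm.
case: (ltnP m b) => [lt_mb|le_bm] /=.
  have := T_submod_far a m.+1 (b - m.+1); rewrite subnKC //.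
  by have := T_rowS a b; lia.
case: b le_bm => [|b] le_bm; first by rewrite !Ta0.
have: ~~ jumps_at a b by apply/negP => /min_m; lia.
by rewrite /jumps_at negb_or => /andP[/eqP ? _]; have := T_rowS a b.+1; lia.
Qed.

Lemma T_sum_jumps a b : a <= d -> T a b = \sum_(k < a) (jump k < b).
Proof.
elim: a => [|a IHa] le_ad; first by rewrite T0b big_ord0.
by rewrite big_ord_recr /= T_succ_row // IHa // ltnW.
Qed.

(* Two rows jumping in the same column [c] would make [T d] grow by 2 from
   [c] to [c.+1]. *)
Lemma jump_inj (k1 k2 : 'I_d) : jump k1 = jump k2 -> k1 = k2.
Proof.
move=> jump_eq; apply/eqP; apply/negPn/negP => ne12.
have split_c : \sum_(k < d) (jump k < (jump k1).+1)
    = \sum_(k < d) (jump k < jump k1) + \sum_(k < d) (jump k == jump k1).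
  by rewrite -big_split; apply: eq_bigr => k _ /=; rewrite ltnS leq_eqVlt; case: ltngtP.
have two : 2 <= \sum_(k < d) (jump k == jump k1).
  rewrite (bigD1 k1) //= (bigD1 k2) /=; last by rewrite eq_sym.
  by rewrite eqxx jump_eq eqxx.
by have := T_colS d (jump k1); rewrite !T_sum_jumps // split_c; lia.
Qed.

Lemma rank_function_perm :
  exists s : {perm 'I_d}, forall a b, a <= d -> T a b = corner_count s a b.
Proof.
pose g (k : 'I_d) : 'I_d := Ordinal (jump_lt (ltn_ord k)).
have g_inj : injective g by move=> k1 k2 [] /jump_inj.
exists (perm g_inj) => a b le_ad.
rewrite T_sum_jumps // (big_ord_widen d (fun k => nat_of_bool (jump k < b)) le_ad).
by rewrite big_mkcond; apply: eq_bigr => k _; rewrite permE /=; case: (k < a).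
Qed.

End RankFunctionPerm.

Local Open Scope ring_scope.

Section CornerRank.

Variable K : fieldType.

Lemma mulmx_pid_mxlE p q a (A : 'M[K]_(p, q)) (i : 'I_a) (j : 'I_q) :
  (pid_mx a *m A) i j = oapp (fun i' => A i' j) 0 (insub (val i)).
Proof.
rewrite mxE; case: insubP => [i' _ i'E|i_out] /=.
  rewrite (bigD1 i') //= big1 ?addr0 => [|l ne_li'].
    by rewrite mxE i'E eqxx ltn_ord mul1r.
  by rewrite mxE -i'E eq_sym val_eqE (negbTE ne_li') mul0r.
rewrite big1 // => l _; rewrite mxE; case: eqP => [il|]; last by rewrite mul0r.
by move: i_out => /=; rewrite il ltn_ord.
Qed.

Lemma mulmx_pid_mxrE p q b (A : 'M[K]_(p, q)) (i : 'I_p) (j : 'I_b) :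
  (A *m pid_mx b) i j = oapp (fun j' => A i j') 0 (insub (val j)).
Proof.
rewrite mxE; case: insubP => [j' _ j'E|j_out] /=.
  rewrite (bigD1 j') //= big1 ?addr0 => [|l ne_lj'].
    by rewrite mxE j'E eqxx ltn_ord mulr1.
  by rewrite mxE -j'E val_eqE (negbTE ne_lj') mulr0.
rewrite big1 // => l _; rewrite mxE; case: eqP => [lj|]; last by rewrite mulr0.
by move: j_out => /=; rewrite -lj ltn_ord.
Qed.

Variables (m n : nat) (Z : 'M[K]_(m, n)).

Definition corner_rank (a b : nat) : nat := \rank (\matrix_(i < a, j < b) mxnat Z i j).

Lemma corner_rankE a b : corner_rank a b = \rank (pid_mx a *m Z *m pid_mx b : 'M_(a, b)).
Proof.
congr (\rank _); apply/matrixP => i j; rewrite mxE mulmx_pid_mxrE /mxnat.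
by case: (insub (val j)) => [j'|] /=; rewrite ?mulmx_pid_mxlE //; case: (insub (val i)).
Qed.

Lemma corner_rank0l b : corner_rank 0 b = 0%N.
Proof. by apply/eqP; rewrite -leqn0 corner_rankE rank_leq_row. Qed.

Lemma corner_rank0r a : corner_rank a 0 = 0%N.
Proof. by apply/eqP; rewrite -leqn0 corner_rankE rank_leq_col. Qed.

Lemma pid_mx_corner_rowS a b :
  (pid_mx a : 'M_(a, a.+1)) *m (pid_mx a.+1 *m Z *m pid_mx b)
  = pid_mx a *m Z *m pid_mx b :> 'M_(a, b).
Proof. by rewrite !mulmxA mul_pid_mx (minn_idPl (leqnSn a)) (minn_idPr (leqnSn a)). Qed.

Lemma pid_mx_corner_colS a b :
  (pid_mx a *m Z *m pid_mx b.+1) *m (pid_mx b : 'M_(b.+1, b))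
  = pid_mx a *m Z *m pid_mx b :> 'M_(a, b).
Proof. by rewrite -!mulmxA mul_pid_mx !(minn_idPr (leqnSn b)). Qed.

Lemma corner_rank_rowS a b :
  (corner_rank a b <= corner_rank a.+1 b <= (corner_rank a b).+1)%N.
Proof.
rewrite !corner_rankE -pid_mx_corner_rowS mxrankM_maxr /=.
have := mxrank_mul_min (pid_mx a : 'M[K]_(a, a.+1))
  (pid_mx a.+1 *m Z *m pid_mx b : 'M_(a.+1, b)).
by rewrite rank_pid_mx //; lia.
Qed.

Lemma corner_rank_colS a b :
  (corner_rank a b <= corner_rank a b.+1 <= (corner_rank a b).+1)%N.
Proof.
rewrite !corner_rankE -pid_mx_corner_colS mxrankM_maxl /=.
have := mxrank_mul_min (pid_mx a *m Z *m pid_mx b.+1 : 'M_(a, b.+1))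
  (pid_mx b : 'M[K]_(b.+1, b)).
by rewrite rank_pid_mx //; lia.
Qed.

Lemma corner_rank_submod a b :
  (corner_rank a.+1 b + corner_rank a b.+1 <= corner_rank a.+1 b.+1 + corner_rank a b)%N.
Proof.
have := mxrank_Frobenius (pid_mx a : 'M[K]_(a, a.+1))
  (pid_mx a.+1 *m Z *m pid_mx b.+1 : 'M_(a.+1, b.+1)) (pid_mx b : 'M[K]_(b.+1, b)).
by rewrite pid_mx_corner_rowS !pid_mx_corner_colS !corner_rankE; lia.
Qed.

Lemma corner_rank_full a : row_free Z -> (a <= m)%N -> corner_rank a n = a.
Proof.
by move=> Zfree le_am; rewrite corner_rankE pid_mx_1 mulmx1 mxrankMfree // rank_pid_mx.
Qed.

End CornerRank.

Lemma corner_rank_perm (K : fieldType) m n d (Z : 'M[K]_(m, n)) :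
  row_free Z -> m = d -> n = d ->
  exists s : {perm 'I_d}, forall a b, (a <= d)%N -> corner_rank Z a b = corner_count s a b.
Proof.
move=> Zfree md nd; subst m n; apply: rank_function_perm.
- exact: corner_rank_rowS.
- exact: corner_rank_colS.
- exact: corner_rank_submod.
- exact: corner_rank0l.
- exact: corner_rank0r.
- by move=> a; apply: corner_rank_full.
Qed.

Local Close Scope ring_scope.

Lemma prefix_sum_mono (f : nat -> nat) :
  {homo (fun i => \sum_(1 <= k < i.+1) f k) : i j / i <= j}.
Proof.
apply: (homo_leq leqnn leq_trans) => i.
by rewrite [X in _ <= X]big_nat_recr //= leq_addr.
Qed.

Lemma Rpre_mono n dy dx : {homo Rpre n dy dx : i j / i <= j}.
Proof. exact: prefix_sum_mono. Qed.

Lemma Cpre_mono n dy dx : {homo Cpre n dy dx : i j / i <= j}.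
Proof. exact: prefix_sum_mono. Qed.

Lemma Rpre0 n dy dx : Rpre n dy dx 0 = 0.
Proof. by rewrite /Rpre big_geq. Qed.

Lemma Cpre0 n dy dx : Cpre n dy dx 0 = 0.
Proof. by rewrite /Cpre big_geq. Qed.

Lemma Rpre_last n dy dx :
  Rpre n dy dx n.*2.+1 = \sum_(i < n.+1) dy i + \sum_(j < n) dx (n - j).
Proof.
rewrite /Rpre (big_cat_nat _ (n := n.+2)) //=; last by lia.
congr (_ + _).
  by rewrite big_add1 /= big_mkord; apply: eq_bigr => i _; rewrite /rs ltn_ord.
rewrite -[n.+2]add0n big_addn (_ : n.*2.+2 - n.+2 = n); last by lia.
rewrite big_mkord; apply: eq_bigr => i _; rewrite /rs.
have := ltn_ord i; rewrite (_ : i + n.+2 <= n.+1 = false); last by lia.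
by move=> lt_in; congr dx; lia.
Qed.

Lemma Cpre_last n dy dx :
  Cpre n dy dx n.*2.+1 = \sum_(j < n) dx (n - j) + \sum_(i < n.+1) dy i.
Proof.
rewrite /Cpre (big_cat_nat _ (n := n.+1)) //=; last by lia.
congr (_ + _).
  by rewrite big_add1 /= big_mkord; apply: eq_bigr => i _; rewrite /cs ltn_ord subSS.
rewrite -[n.+1]add0n big_addn (_ : n.*2.+2 - n.+1 = n.+1); last by lia.
rewrite big_mkord; apply: eq_bigr => i _; rewrite /cs.
by rewrite (_ : i + n.+1 <= n = false) ?addnK //; lia.
Qed.

Local Open Scope ring_scope.

Lemma row_free_block_mx1 (K : fieldType) m n (A : 'M[K]_(m, n)) :
  row_free (block_mx A 1%:M 1%:M 0 : 'M_(m + n, n + m)).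
Proof.
have inv : block_mx A 1%:M 1%:M 0 *m block_mx 0 1%:M 1%:M (- A) = 1%:M :> 'M_(m + n).
  rewrite mulmx_block !mulmx0 !mulmx1 !mul1mx !mul0mx !addr0 !add0r subrr.
  by rewrite -scalar_mx_block.
apply/eqP/anti_leq; rewrite rank_leq_row /=.
by rewrite -{1}(mxrank1 K (m + n)) -inv mxrankM_maxl.
Qed.

Section PermMatrix.

Variables (K : fieldType) (n : nat) (dy dx : nat -> nat).
Let d := dtot n dy dx.

Lemma perm_mx_eq1 (s : {perm 'I_d}) a c : (perm_mx s a c == 1 :> K) = (s a == c).
Proof. by rewrite !mxE; case: (s a == c); rewrite ?eqxx // eq_sym oner_eq0. Qed.

Lemma nones_perm_mx (s : {perm 'I_d}) i j :
  nones (perm_mx s : 'M[K]_d) i j = block_count (Rpre n dy dx) (Cpre n dy dx) s i j.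
Proof.
pose one_in_block (a c : 'I_d) := [&& (Rpre n dy dx i.-1 <= a < Rpre n dy dx i)%N,
  (Cpre n dy dx j.-1 <= c < Cpre n dy dx j)%N & perm_mx s a c == 1 :> K].
rewrite /nones /block_count -sum1_card big_mkcond /=.
rewrite (eq_bigr (fun p => nat_of_bool (one_in_block p.1 p.2))) => [|[a c] _]; last first.
  by rewrite inE /one_in_block /=; case: [&& _, _ & _].
rewrite -(pair_bigA _ (fun a c => nat_of_bool (one_in_block a c))) /=; apply: eq_bigr => a _.
rewrite (bigD1 (s a)) //= big1 ?addn0 => [|c ne_c].
  by rewrite /one_in_block perm_mx_eq1 eqxx andbT.
by rewrite /one_in_block perm_mx_eq1 eq_sym (negbTE ne_c) !andbF.
Qed.

Lemma nw_rows_perm_mx (s : {perm 'I_d}) :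
  nw_rows (perm_mx s : 'M[K]_d) <-> nw_row_blocks (Rpre n dy dx) n.*2.+1 s.
Proof.
split=> nw.
  by move=> i r1 r2 iN r1i r2i lt12; apply: (nw i r1 r2 (s r1) (s r2)) => //;
    apply/eqP; rewrite perm_mx_eq1.
move=> i a1 a2 c1 c2 iN in1 in2 /eqP + /eqP; rewrite !perm_mx_eq1.
by move=> /eqP e1 /eqP e2; move: in1 in2; rewrite -e1 -e2; apply: nw.
Qed.

Lemma nw_cols_perm_mx (s : {perm 'I_d}) :
  nw_cols (perm_mx s : 'M[K]_d) <-> nw_col_blocks (Cpre n dy dx) n.*2.+1 s.
Proof.
split=> nw.
  by move=> j r1 r2 jN r1j r2j lt12; apply: (nw j r1 r2 (s r1) (s r2)) => //;
    apply/eqP; rewrite perm_mx_eq1.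
move=> j a1 a2 c1 c2 jN in1 in2 /eqP + /eqP; rewrite !perm_mx_eq1.
by move=> /eqP e1 /eqP e2; move: in1 in2; rewrite -e1 -e2; apply: nw.
Qed.

End PermMatrix.

Lemma brank_corner_count (K : fieldType) n dy dx
  (Va : forall k, 'M[K]_(dy k.-1, dx k)) (Vb : forall k, 'M[K]_(dy k, dx k)) :
  exists sig : {perm 'I_(dtot n dy dx)}, forall i j,
    (i <= n.*2.+1)%N -> (j <= n.*2.+1)%N ->
    brank n Va Vb i j = corner_count sig (Rpre n dy dx i) (Cpre n dy dx j).
Proof.
have [sig corner_sig] := corner_rank_perm (row_free_block_mx1 (MQ n Va Vb))
  (esym (Rpre_last n dy dx)) (etrans (addnC _ _) (esym (Rpre_last n dy dx))).
by exists sig => i j iN jN; rewrite /brank iN jN; apply: corner_sig; apply: Rpre_mono.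
Qed.

Theorem proposition4p8 (K : fieldType) (n : nat) (dy dx : nat -> nat)
  (Va : forall k, 'M[K]_(dy k.-1, dx k)) (Vb : forall k, 'M[K]_(dy k, dx k))
  (r : nat -> nat -> nat)
  (HVr : forall p q : nat, (p <= q <= n.*2)%N -> r p q = \rank (@MJ K n dy dx Va Vb p q)) :
  exists! v : 'M[K]_(dtot n dy dx),
    [/\ is_perm_mx v,
        (forall i j : nat, (1 <= i <= n.*2.+1)%N -> (1 <= j <= n.*2.+1)%N ->
           (@nones K n dy dx v i j)%:Z =
             ((@brank K n dy dx Va Vb i j)%:Z + (@brank K n dy dx Va Vb i.-1 j.-1)%:Z
              - (@brank K n dy dx Va Vb i j.-1)%:Z - (@brank K n dy dx Va Vb i.-1 j)%:Z)%R),
        @nw_rows K n dy dx v & @nw_cols K n dy dx v].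
Proof.
(* [b(r)] is computed from [V] itself. *)
pose R := Rpre n dy dx; pose C := Cpre n dy dx; pose N := n.*2.+1.
have [R_mono C_mono] : {homo R : i j / i <= j}%N /\ {homo C : i j / i <= j}%N.
  by split; [apply: Rpre_mono | apply: Cpre_mono].
have CN : C N = dtot n dy dx by rewrite /C Cpre_last /dtot Rpre_last addnC.
have [sig brankE] := brank_corner_count n Va Vb.
have countE i j : (0 < i <= N)%N -> (0 < j <= N)%N ->
    (block_count R C sig i j)%:Z = (brank n Va Vb i j)%:Z + (brank n Va Vb i.-1 j.-1)%:Z
                                   - (brank n Va Vb i j.-1)%:Z - (brank n Va Vb i.-1 j)%:Z.
  move=> /andP[_ iN] /andP[_ jN].
  rewrite !brankE ?(leq_trans (leq_pred _)) //.
  by have := block_count_corner R_mono C_mono sig i j; rewrite /R /C; lia.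
have [tau [tau_counts tau_nwr tau_nwc]] := exists_nw_perm R_mono C_mono N sig.
exists (perm_mx tau); split.
  split; [exact: perm_mx_is_perm| |exact/nw_rows_perm_mx|exact/nw_cols_perm_mx].
  by move=> i j iN jN; rewrite nones_perm_mx tau_counts ?countE.
move=> v [/is_perm_mxP[s ->] s_counts /nw_rows_perm_mx s_nwr /nw_cols_perm_mx s_nwc].
congr perm_mx; apply: (nw_perm_uniq C_mono (Rpre0 n dy dx) _ (Cpre0 n dy dx) CN) => //.
move=> i j iN jN; rewrite tau_counts //.
by have := s_counts i j iN jN; rewrite nones_perm_mx -countE // => -[].
Qed.
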